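(* There exists a probability distribution $\gamma$ on $\mathbb{Z}_7$ such that $\hat{\gamma}(3)=\hat{\gamma}(-3)$ and the random walk on $\mathbb{Z}_7$ with step distribution $\gamma$ is reconstructive.
   Context: $\hat{\gamma}(x)=\sum_{k\in\mathbb{Z}_7}\omega_7^{kx}\gamma(k)$ with $\omega_7=e^{-2\pi i/7}$. The random walk has $v(1)$ uniform on $\mathbb{Z}_7$ and independent steps with $\mathbb{P}(v(t+1)-v(t)=k)=\gamma(k)$. It is reconstructive if, for any two labelings $f_1,f_2:\mathbb{Z}_7\to\{0,1\}$, the distributions of $\{f_1(v(t))\}_{t\ge1}$ and $\{f_2(v(t))\}_{t\ge1}$ coincide only if there is $\ell$ with $f_1(k)=f_2(k+\ell)$ for all $k$. *)

From HB Require Import structures.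
From mathcomp Require Import all_boot all_order all_algebra.
From mathcomp Require Import complex.
From mathcomp Require Import reals trigo.
Set Implicit Arguments. Unset Strict Implicit. Unset Printing Implicit Defensive.
Import Order.TTheory GRing.Theory Num.Theory.
Local Open Scope ring_scope.
Local Open Scope complex_scope.

Section Walk.
Variable R : realType.

Definition is_distr (gamma : 'Z_7 -> R) : Prop :=
  (forall k, 0 <= gamma k) /\ \sum_(k : 'Z_7) gamma k = 1.

Definition omega7 : R[i] :=
  (cos (2 * pi / 7%:R))%:C - 'i * (sin (2 * pi / 7%:R))%:C.

(* \hat gamma(x) = \sum_k omega_7^{k x} gamma(k); the exponent k*x is
   computed in Z_7, which is legitimate since omega_7^7 = 1 *)
Definition fhat (gamma : 'Z_7 -> R) (x : 'Z_7) : R[i] :=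
  \sum_(k : 'Z_7) omega7 ^+ (nat_of_ord (k * x)) * (gamma k)%:C.

(* probability that, starting from state x, the labels f(v(2)),...,f(v(n+1))
   of the next n states equal the word w *)
Fixpoint walk_from (gamma : 'Z_7 -> R) (f : 'Z_7 -> bool) (x : 'Z_7)
  (w : seq bool) : R :=
  match w with
  | [::] => 1
  | b :: w' => \sum_(y : 'Z_7) gamma (y - x) * (f y == b)%:R * walk_from gamma f y w'
  end.

Definition word_prob (gamma : 'Z_7 -> R) (f : 'Z_7 -> bool) (w : seq bool) : R :=
  match w with
  | [::] => 1
  | b :: w' => \sum_(x : 'Z_7) 7%:R^-1 * (f x == b)%:R * walk_from gamma f x w'
  end.

(* the label processes {f1(v(t))} and {f2(v(t))} have the same distribution
   on {0,1}^N, i.e. the same finite-dimensional distributions *)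
Definition same_label_law (gamma : 'Z_7 -> R) (f1 f2 : 'Z_7 -> bool) : Prop :=
  forall w : seq bool, word_prob gamma f1 w = word_prob gamma f2 w.

Definition reconstructive (gamma : 'Z_7 -> R) : Prop :=
  forall f1 f2 : 'Z_7 -> bool, same_label_law gamma f1 f2 ->
    exists l : 'Z_7, forall k : 'Z_7, f1 k = f2 (k + l).

End Walk.

(* Take gamma supported on the steps {1, 2}, with weights proportional to
   sin(2pi/7) and sin(6pi/7).  As omega^4 and omega^6 are the conjugates of omega^3
   and omega, the real parts of gamma^(3) and gamma^(-3) agree for any weights, and
   this ratio makes the imaginary parts agree as well.  Since both
   steps have positive weight, a label word has positive probability exactly when it
   can be read along some walk with steps 1 and 2; so equal label laws give equal
   sets of readable words, and an exhaustive check over the 128 labelings shows that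
   the readable words of length 6 already determine a labeling up to rotation. *)

From mathcomp Require Import all_boot all_order all_algebra.
From mathcomp Require Import complex.
From mathcomp Require Import reals trigo.
From mathcomp Require Import ring lra.
Import Order.TTheory GRing.Theory Num.Theory.
Set Implicit Arguments. Unset Strict Implicit. Unset Printing Implicit Defensive.
Local Open Scope ring_scope.

Section ReadableWords.
Local Open Scope nat_scope.

Definition label (L : seq bool) (i : nat) : bool := nth false L (i %% 7).

Fixpoint readable_from (L : seq bool) (x : nat) (w : seq bool) : bool :=
  if w is b :: w' then
    [|| (label L (x + 1) == b) && readable_from L (x + 1) w'
      | (label L (x + 2) == b) && readable_from L (x + 2) w']
  else true.

Definition readable (L : seq bool) (w : seq bool) : bool :=
  if w is b :: w' then
    has (fun x => (label L x == b) && readable_from L x w') (iota 0 7)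
  else true.

Fixpoint bool_words (n : nat) : seq (seq bool) :=
  if n is n'.+1 then [seq b :: w | b <- [:: false; true], w <- bool_words n']
  else [:: [::]].

Definition readable_profile (L : seq bool) : seq bool :=
  map (readable L) (bool_words 6).

Definition rotation_of (L1 L2 : seq bool) : bool :=
  has (fun l => all (fun k => label L1 k == label L2 (k + l)) (iota 0 7)) (iota 0 7).

(* The pairs are shared so that each profile is computed once. *)
Lemma readable_profile_injective_mod_rotation :
  let P := [seq (L, readable_profile L) | L <- bool_words 7] in
  all (fun p1 => all (fun p2 => (p1.2 != p2.2) || rotation_of p1.1 p2.1) P) P.
Proof. by vm_compute. Qed.

Lemma mem_bool_words n (w : seq bool) : size w = n -> w \in bool_words n.
Proof.
elim: n w => [|n IHn] [|b w] //= [size_w].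
by rewrite !mem_cat; case: b; rewrite map_f ?orbT ?IHn.
Qed.

Lemma rotation_of_profile_eq L1 L2 :
  size L1 = 7 -> size L2 = 7 -> readable_profile L1 = readable_profile L2 ->
  rotation_of L1 L2.
Proof.
move=> size1 size2 eq12; have /allP := readable_profile_injective_mod_rotation.
move=> /(_ (L1, readable_profile L1)); rewrite map_f ?mem_bool_words //.
move=> /(_ isT) /allP /(_ (L2, readable_profile L2)).
by rewrite map_f ?mem_bool_words //= eq12 eqxx => /(_ isT).
Qed.

Lemma readable_from_mod L x w : readable_from L (x %% 7) w = readable_from L x w.
Proof.
elim: w x => [|b w IHw] x //=.
by rewrite /label -!(IHw (_ + _)) !modnDml.
Qed.

End ReadableWords.

Definition labels_of (f : 'Z_7 -> bool) : seq bool := [seq f (inZp i) | i <- iota 0 7].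

Lemma size_labels_of f : size (labels_of f) = 7%N.
Proof. by rewrite size_map size_iota. Qed.

Lemma label_labels_of f i : label (labels_of f) i = f (inZp i).
Proof.
rewrite /label (nth_map 0%N) ?nth_iota ?size_iota ?ltn_pmod //.
by congr f; apply: val_inj; rewrite /= modn_mod.
Qed.

Lemma label_labels_ofZp f (x : 'Z_7) : label (labels_of f) x = f x.
Proof. by rewrite label_labels_of; congr f; apply: val_inj; rewrite /= modn_small. Qed.

Lemma sum_support12 (V : nmodType) (G : 'Z_7 -> V) :
  (forall k, k != 1 -> k != 2 -> G k = 0) -> \sum_k G k = G 1 + G 2.
Proof.
move=> G_supp; rewrite (bigD1 1) //= (bigD1 2) //= big1 ?addr0 ?addrA //.
by move=> k /andP[k_neq2 k_neq1]; apply: G_supp.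
Qed.

Section SupportOneTwo.
Variables (R : realType) (gamma : 'Z_7 -> R).
Hypothesis gamma_ge0 : forall k, 0 <= gamma k.
Hypotheses (gamma1_gt0 : 0 < gamma 1) (gamma2_gt0 : 0 < gamma 2).
Hypothesis gamma_supp : forall k, k != 1 -> k != 2 -> gamma k = 0.

Lemma walk_from_ge0 f x w : 0 <= walk_from gamma f x w.
Proof.
elim: w x => [|b w IHw] x /=; first exact: ler01.
by apply: sumr_ge0 => y _; rewrite !mulr_ge0 ?ler0n.
Qed.

Lemma walk_from_neq0 f (x : 'Z_7) w :
  (walk_from gamma f x w != 0) = readable_from (labels_of f) x w.
Proof.
elim: w x => [|b w IHw] x /=; first exact: oner_neq0.
have addxK (k : 'Z_7) : x + k - x = k by rewrite addrC addKr.
rewrite (reindex_inj (addrI x)) /= sum_support12 => [|k k1 k2]; last first.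
  by rewrite addxK gamma_supp ?mul0r.
rewrite !addxK paddr_eq0 ?mulr_ge0 ?ler0n ?walk_from_ge0 //.
rewrite negb_and !mulf_eq0 !negb_or (lt0r_neq0 gamma1_gt0) (lt0r_neq0 gamma2_gt0).
rewrite !pnatr_eq0 !eqb0 !negbK !IHw -!label_labels_ofZp.
have readable_addZp (k : 'Z_7) w' : readable_from (labels_of f) ((x + k)%R : 'Z_7) w'
    = readable_from (labels_of f) (x + k) w'.
  by rewrite -[RHS]readable_from_mod.
have label_addZp (k : 'Z_7) : label (labels_of f) ((x + k)%R : 'Z_7)
    = label (labels_of f) (x + k).
  by rewrite /label -[in RHS]modn_mod.
by rewrite !readable_addZp !label_addZp.
Qed.

Lemma word_prob_neq0 f w : (word_prob gamma f w != 0) = readable (labels_of f) w.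
Proof.
case: w => [|b w]; first exact: oner_neq0.
rewrite /word_prob /readable psumr_neq0 => [|x _]; last first.
  by rewrite !mulr_ge0 ?invr_ge0 ?ler0n ?walk_from_ge0.
have term_gt0 (x : 'Z_7) : (0 < 7%:R^-1 * (f x == b)%:R * walk_from gamma f x w)
    = (label (labels_of f) x == b) && readable_from (labels_of f) x w.
  rewrite lt0r !mulr_ge0 ?invr_ge0 ?ler0n ?walk_from_ge0 // andbT.
  by rewrite !mulf_eq0 !negb_or invr_eq0 !pnatr_eq0 eqb0 negbK walk_from_neq0 label_labels_ofZp.
apply/hasP/hasP => [[x _ x_ok] | [i i_in i_ok]].
  by exists (nat_of_ord x); rewrite ?mem_iota ?ltn_ord // -term_gt0.
move: i_in; rewrite mem_iota add0n => /andP[_ lt_i7].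
by exists (Ordinal lt_i7); rewrite ?mem_index_enum // term_gt0.
Qed.

Lemma reconstructive_support12 : reconstructive gamma.
Proof.
move=> f1 f2 same_law.
have same_profile : readable_profile (labels_of f1) = readable_profile (labels_of f2).
  by apply: eq_map => w; rewrite -!word_prob_neq0 same_law.
have /hasP[l _ /allP rot] :=
  rotation_of_profile_eq (size_labels_of f1) (size_labels_of f2) same_profile.
exists (inZp l) => k; have := rot k; rewrite mem_iota add0n ltn_ord => /(_ isT) /eqP.
rewrite label_labels_ofZp label_labels_of => ->; congr f2.
by apply: val_inj; rewrite /= modnDmr.
Qed.

End SupportOneTwo.

Section StepsOneTwo.
Local Open Scope complex_scope.
Variable R : realType.

Definition theta7 : R := 2 * pi / 7%:R.

Lemma omega7X n :
  omega7 R ^+ n = Complex (cos (n%:R * theta7)) (- sin (n%:R * theta7)).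
Proof.
elim: n => [|n IHn]; first by rewrite expr0 !mul0r cos0 sin0 oppr0.
have omega7E : omega7 R = Complex (cos theta7) (- sin theta7).
  by apply/eqP; rewrite eq_complex /=; apply/andP; split; apply/eqP; ring.
rewrite exprS IHn omega7E -addn1 natrD mulrDl mul1r cosD sinD.
by apply/eqP; rewrite eq_complex /=; apply/andP; split; apply/eqP; ring.
Qed.

Lemma sin_theta7_gt0 : 0 < sin theta7.
Proof. by apply: sin_gt0_pi; rewrite /theta7; have := pi_gt0 R; lra. Qed.

Lemma sin_3theta7_gt0 : 0 < sin (3%:R * theta7).
Proof. by apply: sin_gt0_pi; rewrite /theta7; have := pi_gt0 R; lra. Qed.

Definition step12 (a b : R) (k : 'Z_7) : R :=
  if k == 1 then a else if k == 2 then b else 0.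

Lemma step12_1 a b : step12 a b 1 = a.
Proof. by rewrite /step12 eqxx. Qed.

Lemma step12_2 a b : step12 a b 2 = b.
Proof. by []. Qed.

Lemma step12_supp a b k : k != 1 -> k != 2 -> step12 a b k = 0.
Proof. by rewrite /step12 => /negbTE-> /negbTE->. Qed.

Lemma is_distr_step12 a b : 0 <= a -> 0 <= b -> a + b = 1 -> is_distr (step12 a b).
Proof.
move=> a_ge0 b_ge0 ab1; split => [k|]; first by rewrite /step12; case: ifP => // _; case: ifP.
by rewrite sum_support12 // => k; apply: step12_supp.
Qed.

Lemma fhat_step12_sym a b :
  a * sin (3%:R * theta7) = b * sin theta7 -> fhat (step12 a b) 3 = fhat (step12 a b) (- 3).
Proof.
move=> ab_sin; rewrite /fhat !sum_support12;
  try by move=> k k1 k2; rewrite step12_supp ?mulr0.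
rewrite !omega7X step12_1 step12_2 /=.
have cos2piB t : cos (pi *+ 2 - t) = cos t by rewrite cosB cos2pi sin2pi mul1r mul0r addr0.
have sin2piB t : sin (pi *+ 2 - t) = - sin t by rewrite sinB cos2pi sin2pi mul1r mul0r sub0r.
have -> : 4%:R * theta7 = pi *+ 2 - 3%:R * theta7 by rewrite /theta7 mulr2n; field.
have -> : 6%:R * theta7 = pi *+ 2 - 1%:R * theta7 by rewrite /theta7 mulr2n; field.
rewrite !cos2piB !sin2piB opprK mul1r.
apply/eqP; rewrite eq_complex /=; apply/andP; split; apply/eqP; lra.
Qed.

End StepsOneTwo.

Theorem theorem6 (R : realType) :
  exists gamma : 'Z_7 -> R,
    is_distr gamma /\ fhat gamma 3 = fhat gamma (- 3) /\ reconstructive gamma.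
Proof.
have s1_gt0 := sin_theta7_gt0 R; have s3_gt0 := sin_3theta7_gt0 R.
set s1 := sin (theta7 R) in s1_gt0 *; set s3 := sin (3%:R * theta7 R) in s3_gt0 *.
have D_gt0 : 0 < s1 + s3 by lra.
have distr : is_distr (step12 (s1 / (s1 + s3)) (s3 / (s1 + s3))).
  by apply: is_distr_step12; rewrite ?ltW ?divr_gt0 // -mulrDl divff ?gt_eqF.
exists (step12 (s1 / (s1 + s3)) (s3 / (s1 + s3))); split=> //; split.
- by apply: fhat_step12_sym; rewrite mulrAC [RHS]mulrAC (mulrC s1 s3).
- case: distr => ge0 _; apply: reconstructive_support12 => //.
  + by rewrite step12_1 divr_gt0.
  + by rewrite step12_2 divr_gt0.
  + exact: step12_supp.
Qed.
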